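(* Let $E$ be a finite nonempty set, $f:2^E\to\mathbb{N}$ an integral polymatroid rank function, and let $C_e:\mathbb{N}\times\mathbb{N}\to\mathbb{R}_+$, $e\in E$, be regular functions. Let $D\subseteq\mathbb{N}$ be a set of integers with $\mathbb{B}_f(d)\neq\emptyset$ for all $d\in D$. Then for every $\vec t\in\mathbb{N}^E$, every $d\in D$, every optimal solution $\vec x^*(\vec t,d)$ of $P(\vec t,d)$, every $d'\in D$ and every $\vec t'\in\mathbb{N}^E$, there is an optimal solution $\vec x^*(\vec t',d')$ of $P(\vec t',d')$ that can be obtained from $\vec x^*(\vec t,d)$ by performing at most $\|\vec t-\vec t'\|+|d-d'|$ elementary exchange steps.
   Context: $\mathbb{N}=\{0,1,2,\dots\}$. A set function $f:2^E\to\mathbb{N}$ is an integral polymatroid rank function if $f(\emptyset)=0$, $f$ is monotone and submodular. For $\vec x\in\mathbb{N}^E$, $x(U)=\sum_{e\in U}x_e$; $\mathbb{B}_f(d)=\{\vec x\in\mathbb{N}^E: x(U)\le f(U)\ \forall U\subseteq E,\ x(E)=d\}$. $P(\vec t,d)$: minimize $\sum_{e\in E}C_e(x_e;t_e)$ subject to $\vec x\in\mathbb{B}_f(d)$. $\|\cdot\|$ is the $L_1$-norm. For $C:\mathbb{N}\times\mathbb{N}\to\mathbb{R}$, $C^-(x;t)=C(x;t)-C(x-1;t)$ for $x\ge1$; $C$ is regular if $C^-(x;t)\le C^-(x;t+1)$ and $C^-(x;t+1)\le C^-(x+1;t)$ for all $x\ge1$, $t\in\mathbb{N}$. An elementary exchange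 step modifies the current integral vector either by shifting one unit from one element to another (adding $\chi_g-\chi_e$ for some $e\neq g$, $\chi_e$ the unit vector of $e$) or by adding (or removing) one unit at a single element. *)

From HB Require Import structures.
From mathcomp Require Import all_boot all_order all_algebra.
Set Implicit Arguments. Unset Strict Implicit. Unset Printing Implicit Defensive.
Import Order.TTheory GRing.Theory Num.Theory.

Definition polymatroid_rank (T : finType) (f : {set T} -> nat) : Prop :=
  [/\ f set0 = 0,
      (forall A B : {set T}, A \subset B -> f A <= f B) &
      (forall A B : {set T}, f (A :|: B) + f (A :&: B) <= f A + f B)].

Definition xsum (T : finType) (x : {ffun T -> nat}) (U : {set T}) : nat :=
  \sum_(e in U) x e.

Definition inB (T : finType) (f : {set T} -> nat) (d : nat) (x : {ffun T -> nat}) : Prop :=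
  (forall U : {set T}, xsum x U <= f U) /\ xsum x [set: T] = d.

(* C^-(x;t) = C(x;t) - C(x-1;t), for x >= 1 *)
Definition Cminus (R : realFieldType) (C : nat -> nat -> R) (x t : nat) : R :=
  (C x t - C x.-1 t)%R.

Definition regular (R : realFieldType) (C : nat -> nat -> R) : Prop :=
  forall x t : nat, 1 <= x ->
    (Cminus C x t <= Cminus C x t.+1)%R /\ (Cminus C x t.+1 <= Cminus C x.+1 t)%R.

Definition cost (R : realFieldType) (T : finType) (C : T -> nat -> nat -> R)
  (t x : {ffun T -> nat}) : R := (\sum_(e : T) C e (x e) (t e))%R.

Definition optimal (R : realFieldType) (T : finType) (f : {set T} -> nat)
  (C : T -> nat -> nat -> R) (t : {ffun T -> nat}) (d : nat) (x : {ffun T -> nat}) : Prop :=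
  inB f d x /\ forall y, inB f d y -> (cost C t x <= cost C t y)%R.

Definition elem_step (T : finType) (x y : {ffun T -> nat}) : Prop :=
  (exists e g : T, e != g /\ x e = (y e).+1 /\ y g = (x g).+1 /\
     forall h, h != e -> h != g -> y h = x h)
  \/ (exists e : T, y e = (x e).+1 /\ forall h, h != e -> y h = x h)
  \/ (exists e : T, x e = (y e).+1 /\ forall h, h != e -> y h = x h).

Fixpoint reach_le (T : finType) (k : nat) (x y : {ffun T -> nat}) : Prop :=
  match k with
  | 0 => x = y
  | k'.+1 => x = y \/ exists z, elem_step x z /\ reach_le k' z y
  end.

Definition distn (a b : nat) : nat := (a - b) + (b - a).

Definition l1dist (T : finType) (t t' : {ffun T -> nat}) : nat :=
  \sum_(e : T) distn (t e) (t' e).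

From HB Require Import structures.
From mathcomp Require Import all_boot all_order all_algebra.
From mathcomp Require Import zify ring lra.
Import Order.TTheory GRing.Theory Num.Theory.
Set Implicit Arguments. Unset Strict Implicit. Unset Printing Implicit Defensive.

(* Both changes of the data decompose into unit changes (one
   coordinate of t, or d, moves by one), so it suffices to show that after a
   unit change some new optimum lies within one elementary step of the old
   optimum x.  Take a new optimum y closest to x in L1 distance.  The exchange
   property of polymatroids (obtained from minimal and maximal tight sets)
   either gives a new optimum within one step of x directly, or yields e, g
   with y e < x e, x g < y g, and both x - chi_e + chi_g and y - chi_g + chi_e
   feasible.  Regularity says that the marginal cost C^-(x; t) increases along
   x <= x', x + t <= x' + t'; comparing marginals with the optimality of x then
   shows that y - chi_g + chi_e is again optimal, and it is closer to x. *)

Section NatSums.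
Variable I : finType.
Implicit Types (P : pred I) (F G : I -> nat).

Lemma ltn_sum P F G a : (forall i, P i -> F i <= G i) -> P a -> F a < G a ->
  \sum_(i | P i) F i < \sum_(i | P i) G i.
Proof.
move=> le_FG Pa lt_a; rewrite (bigD1 a) //= [X in _ < X](bigD1 a) //=.
by rewrite -addSn leq_add // leq_sum // => i /andP[/le_FG].
Qed.

Lemma exists_ltn_of_sum P F G : \sum_(i | P i) F i < \sum_(i | P i) G i ->
  exists2 i, P i & F i < G i.
Proof.
move=> lt_sum; apply/(@exists_inP _ P (fun i => F i < G i)).
apply: contraTT lt_sum => /exists_inPn le_GF.
by rewrite -leqNgt; apply: leq_sum => i /le_GF; rewrite -leqNgt.
Qed.

End NatSums.

Section UnitMoves.
Variable T : finType.
Implicit Types (x y : {ffun T -> nat}) (U V : {set T}).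

Definition incr x e : {ffun T -> nat} := [ffun h => x h + (h == e)].
Definition decr x e : {ffun T -> nat} := [ffun h => x h - (h == e)].
Definition shift x e g := incr (decr x e) g.

Lemma shiftE x e g h : shift x e g h = x h - (h == e) + (h == g).
Proof. by rewrite !ffunE. Qed.

Lemma decrK x e : 0 < x e -> incr (decr x e) e = x.
Proof. by move=> xe; apply/ffunP => h; rewrite !ffunE; case: eqP => [->|] /=; lia. Qed.

Lemma sum_indicator U g : \sum_(h in U) (h == g : nat) = (g \in U).
Proof.
case: (boolP (g \in U)) => gU.
  by rewrite (bigD1 g) //= eqxx big1 // => h /andP[_ /negbTE ->].
by rewrite big1 // => h hU; case: eqP => // hg; rewrite -hg hU in gU.
Qed.

Lemma xsum_incr x g U : xsum (incr x g) U = xsum x U + (g \in U).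
Proof. by rewrite /xsum -sum_indicator -big_split; apply: eq_bigr => h _; rewrite ffunE. Qed.

Lemma xsum_decr x e U : 0 < x e -> xsum (decr x e) U + (e \in U) = xsum x U.
Proof.
move=> xe; rewrite /xsum -sum_indicator -big_split; apply: eq_bigr => h _.
by rewrite ffunE; case: eqP => [->|] /=; lia.
Qed.

Lemma xsum_shift x e g U : 0 < x e -> xsum (shift x e g) U + (e \in U) = xsum x U + (g \in U).
Proof. by move=> xe; rewrite xsum_incr -(xsum_decr U xe); lia. Qed.

Lemma xsum_setID x U V : xsum x U = xsum x (U :&: V) + xsum x (U :\: V).
Proof. exact: big_setID. Qed.

Lemma xsum_subset x U V : U \subset V -> xsum x U <= xsum x V.
Proof. by move=> /setIidPr UV; rewrite (xsum_setID x V U) UV leq_addr. Qed.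

Lemma xsum_setUI x U V : xsum x (U :|: V) + xsum x (U :&: V) = xsum x U + xsum x V.
Proof.
rewrite (xsum_setID x (U :|: V) V) (xsum_setID x U V) setDUl setDv setU0.
by rewrite (setIidPr (subsetUr U V)); lia.
Qed.

Lemma eq_ffun_of_leq_xsum x y :
  (forall h, x h <= y h) -> xsum x [set: T] = xsum y [set: T] -> x = y.
Proof.
move=> le_xy sum_xy; apply/ffunP => h; apply/eqP; rewrite eqn_leq le_xy leqNgt /=.
apply/negP => lt_h; have := @ltn_sum _ (mem [set: T]) x y h (fun i _ => le_xy i) (in_setT h) lt_h.
by rewrite /xsum in sum_xy; rewrite sum_xy ltnn.
Qed.

Lemma elem_step_shift x e g : 0 < x e -> e != g -> elem_step x (shift x e g).
Proof.
move=> xe eg; have ge : g != e by rewrite eq_sym.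
left; exists e, g; rewrite !shiftE !eqxx (negbTE eg) (negbTE ge) /=.
split=> //; split; first lia; split; first lia.
by move=> h he hg; rewrite shiftE (negbTE he) (negbTE hg); lia.
Qed.

Lemma elem_step_incr x g : elem_step x (incr x g).
Proof.
right; left; exists g; rewrite ffunE eqxx addn1; split => // h /negbTE hg.
by rewrite ffunE hg addn0.
Qed.

Lemma elem_step_decr x e : 0 < x e -> elem_step x (decr x e).
Proof.
move=> xe; right; right; exists e; rewrite ffunE eqxx subn1 prednK //; split => // h /negbTE he.
by rewrite ffunE he subn0.
Qed.

Lemma elem_stepC x y : elem_step x y -> elem_step y x.
Proof.
case=> [[e [g [eg [xe [yg xy]]]]] | [[e [ye xy]] | [e [xe xy]]]].
- left; exists g, e; rewrite eq_sym.
  by split=> //; split=> //; split=> // h hg he; apply/esym/xy.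
- by right; right; exists e; split => // h /xy.
- by right; left; exists e; split => // h /xy.
Qed.

Lemma reach_le_refl k x : reach_le k x x.
Proof. by case: k => [|k] //=; left. Qed.

Lemma reach_le1_step x y : elem_step x y -> reach_le 1 x y.
Proof. by right; exists y. Qed.

Lemma reach_le1C x y : reach_le 1 x y -> reach_le 1 y x.
Proof. by case=> [->|[z [/elem_stepC yz <-]]]; [left | right; exists x]. Qed.

Lemma reach_le_mono k k' x y : k <= k' -> reach_le k x y -> reach_le k' x y.
Proof.
elim: k k' x => [|k IH] [|k'] x //= le_kk'; first by move=> ->; left.
by case=> [->|[z [xz zy]]]; [left | right; exists z; split => //; apply: IH].
Qed.

Lemma reach_le_trans k k' x y z : reach_le k x y -> reach_le k' y z -> reach_le (k + k') x z.
Proof.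
elim: k x => [|k IH] x /=; first by move=> ->.
move=> [->|[w [xw wy]]] yz; last by right; exists w; split => //; apply: IH.
by change (reach_le (k + k').+1 y z); apply: (reach_le_mono _ yz); lia.
Qed.

Lemma reach_le1_of_leq_incr x y a : (forall h, x h <= incr y a h) ->
  xsum x [set: T] = xsum y [set: T] -> reach_le 1 x y.
Proof.
move=> le_xy sum_xy; have [xa|ya] := leqP (x a) (y a).
  suff -> : x = y by apply: reach_le_refl.
  apply: eq_ffun_of_leq_xsum => // h.
  by have := le_xy h; rewrite ffunE; case: eqP => [->|] /=; lia.
have xa : 0 < x a by lia.
have [g _ lt_g] : exists2 g, g \in [set: T] & decr x a g < y g.
  apply: exists_ltn_of_sum; have := xsum_decr [set: T] xa.
  by rewrite in_setT; move: sum_xy; rewrite /xsum; lia.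
have ga : g != a by apply: contraTneq lt_g => ->; rewrite ffunE eqxx; lia.
have ag : a != g by rewrite eq_sym.
rewrite ffunE (negbTE ga) subn0 in lt_g.
suff -> : y = shift x a g by apply/reach_le1_step/elem_step_shift.
apply/esym/eq_ffun_of_leq_xsum => [h|]; last first.
  by have := xsum_shift g [set: T] xa; rewrite !in_setT; lia.
have := le_xy h; rewrite shiftE ffunE.
case: (eqVneq h a) => [->|_]; first by rewrite (negbTE ag) /=; lia.
by case: (eqVneq h g) => [->|_]; rewrite ?(negbTE ga) /=; lia.
Qed.

Lemma l1dist_eq0 x y : l1dist x y = 0 -> x = y.
Proof.
move/eqP; rewrite /l1dist sum_nat_eq0 => /forallP d0; apply/ffunP => h.
by have := d0 h; rewrite /distn; lia.
Qed.

Lemma l1dist_incr x y a : x a < y a -> l1dist x y = (l1dist (incr x a) y).+1.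
Proof.
move=> lt; rewrite /l1dist (bigD1 a) //= [in RHS](bigD1 a) //= ffunE eqxx.
have -> : \sum_(h | h != a) distn (incr x a h) (y h) = \sum_(h | h != a) distn (x h) (y h).
  by apply: eq_bigr => h /negbTE ha; rewrite ffunE ha addn0.
by rewrite /distn; lia.
Qed.

Lemma l1dist_decr x y a : y a < x a -> l1dist x y = (l1dist (decr x a) y).+1.
Proof.
move=> lt; rewrite /l1dist (bigD1 a) //= [in RHS](bigD1 a) //= ffunE eqxx.
have -> : \sum_(h | h != a) distn (decr x a h) (y h) = \sum_(h | h != a) distn (x h) (y h).
  by apply: eq_bigr => h /negbTE ha; rewrite ffunE ha subn0.
by rewrite /distn; lia.
Qed.

Lemma l1dist_shift x y e g : y e < x e -> x g < y g -> l1dist x (shift y g e) < l1dist x y.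
Proof.
move=> lt_e lt_g; have eg : e != g by apply: contraTneq lt_e => ->; rewrite -leqNgt ltnW.
have /negbTE ge : g != e by rewrite eq_sym.
rewrite /l1dist; apply: (ltn_sum (a := e)) => //; last first.
  by rewrite shiftE (negbTE eg) eqxx /distn /=; lia.
move=> h _; rewrite shiftE /distn.
case: (eqVneq h g) => [->|_]; first by rewrite ge /=; lia.
by case: (eqVneq h e) => [->|_] /=; lia.
Qed.

End UnitMoves.

Section SetFamilies.
Variable T : finType.
Implicit Types (P : pred {set T}) (S U : {set T}).

Lemma minset_sub P S U : (forall A B, P A -> P B -> P (A :&: B)) ->
  minset P S -> P U -> S \subset U.
Proof.
move=> PI /minsetP [PS minS] PU.
by rewrite -(minS (S :&: U)) ?subsetIr ?subsetIl ?PI.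
Qed.

Lemma maxset_sup P S U : (forall A B, P A -> P B -> P (A :|: B)) ->
  maxset P S -> P U -> U \subset S.
Proof.
move=> PU' /maxsetP [PS maxS] PU.
by rewrite -(maxS (S :|: U)) ?subsetUr ?subsetUl ?PU'.
Qed.

End SetFamilies.

Definition inP (T : finType) (h : {set T} -> nat) (x : {ffun T -> nat}) : Prop :=
  forall U : {set T}, xsum x U <= h U.

Section Exchange.
Variables (T : finType) (h : {set T} -> nat).
Hypothesis h0 : h set0 = 0.
Hypothesis h_submod : forall A B : {set T}, h (A :|: B) + h (A :&: B) <= h A + h B.
Implicit Types (x p q : {ffun T -> nat}) (A B S U : {set T}).

Lemma tight_setI x A B : inP h x -> xsum x A = h A -> xsum x B = h B ->
  xsum x (A :&: B) = h (A :&: B).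
Proof.
move=> Px tA tB; have := xsum_setUI x A B; have := h_submod A B.
by have := Px (A :&: B); have := Px (A :|: B); lia.
Qed.

Lemma tight_setU x A B : inP h x -> xsum x A = h A -> xsum x B = h B ->
  xsum x (A :|: B) = h (A :|: B).
Proof.
move=> Px tA tB; have := xsum_setUI x A B; have := h_submod A B.
by have := Px (A :&: B); have := Px (A :|: B); lia.
Qed.

Lemma inP_shift x e g : inP h x -> 0 < x e ->
  (forall U, xsum x U = h U -> g \in U -> e \in U) -> inP h (shift x e g).
Proof.
move=> Px xe tight U; have := xsum_shift g U xe; have := Px U.
case: (boolP (e \in U)) => eU; case: (boolP (g \in U)) => gU /=; try lia.
have : xsum x U != h U by apply: contraNneq eU => /tight; apply.
lia.
Qed.

Lemma xsum_setD_tight p q S U : inP h p -> inP h q ->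
  xsum q S = h S -> xsum p U = h U -> xsum p (S :\: U) <= xsum q (S :\: U).
Proof.
move=> Pp Pq tS tU; have := h_submod S U; have := Pp (S :|: U); have := Pq (S :&: U).
have := xsum_setID q S U; have := xsum_setID p (S :|: U) U.
by rewrite setDUl setDv setU0 (setIidPr (subsetUr S U)); lia.
Qed.

Lemma least_tight_set q a : inP h q -> (exists U, xsum q U = h U /\ a \in U) ->
  exists S, [/\ xsum q S = h S, a \in S &
    forall U, xsum q U = h U -> a \in U -> S \subset U].
Proof.
move=> Pq [U0 [tU0 aU0]]; pose tight := [pred U | (xsum q U == h U) && (a \in U)].
have [S minS] : {S | minset tight S} by apply: ex_minset; exists U0; rewrite /= tU0 eqxx.
have /andP [/eqP tS aS] := minsetp minS.
exists S; split=> // U tU aU; apply: (minset_sub _ minS); last by rewrite /= tU eqxx.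
move=> A B /andP [/eqP tA aA] /andP [/eqP tB aB].
by rewrite /= inE aA aB (tight_setI Pq tA tB) eqxx.
Qed.

Lemma greatest_tight_set p a : inP h p ->
  exists S, [/\ xsum p S = h S, a \notin S &
    forall U, xsum p U = h U -> a \notin U -> U \subset S].
Proof.
move=> Pp; pose tight := [pred U | (xsum p U == h U) && (a \notin U)].
have [S maxS] : {S | maxset tight S}.
  by apply: ex_maxset; exists set0; rewrite /= /xsum big_set0 h0 in_set0.
have /andP [/eqP tS aS] := maxsetp maxS.
exists S; split=> // U tU aU; apply: (maxset_sup _ maxS); last by rewrite /= tU eqxx.
move=> A B /andP [/eqP tA aA] /andP [/eqP tB aB].
by rewrite /= inE negb_or aA aB (tight_setU Pp tA tB) eqxx.
Qed.

Lemma polymatroid_exchange p q a : inP h p -> inP h q -> q a < p a ->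
  inP h (incr q a) \/
  exists b, [/\ p b < q b, inP h (shift q b a) & inP h (shift p a b)].
Proof.
move=> Pp Pq lt_a.
have [/forallP P_incr|] := boolP [forall U, xsum (incr q a) U <= h U]; first by left.
rewrite negb_forall => /existsP [U0]; rewrite -ltnNge xsum_incr => viol; right.
have tight_a : exists U, xsum q U = h U /\ a \in U.
  by exists U0; have := Pq U0; case: (a \in U0) viol => /= viol le; split=> //; lia.
have [S [tS aS S_least]] := least_tight_set Pq tight_a.
have [T' [tT aT T_greatest]] := greatest_tight_set a Pp.
have aST : a \in S :\: T' by rewrite inE aS aT.
have [b /andP [bST _] lt_b] : exists2 b, (b \in S :\: T') && (b != a) & p b < q b.
  apply: exists_ltn_of_sum; have := xsum_setD_tight Pp Pq tS tT.
  by rewrite /xsum !(bigD1 (P := fun i => i \in S :\: T') a aST) /=; lia.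
move: bST; rewrite inE => /andP [bT bS].
exists b; split => //; apply: inP_shift => //; try lia.
- by move=> U tU aU; apply: (subsetP (S_least U tU aU)).
- move=> U tU bU; apply: contraNT bT => aU; exact: (subsetP (T_greatest U tU aU)).
Qed.

End Exchange.

Section Bases.
Variables (T : finType) (f : {set T} -> nat).
Hypothesis f_rank : polymatroid_rank f.
Implicit Types x y : {ffun T -> nat}.

Lemma inB_inP d x : inB f d x -> inP f x.
Proof. by case. Qed.

Lemma inB_bounded d x e : inB f d x -> x e <= d.
Proof.
case=> _ <-; have <- : xsum x [set e] = x e by rewrite /xsum big_set1.
exact/xsum_subset/subsetT.
Qed.

Lemma inB_incr d x e : inB f d x -> inP f (incr x e) -> inB f d.+1 (incr x e).
Proof. by case=> _ sx Px; split => //; rewrite xsum_incr in_setT sx addn1. Qed.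

Lemma inB_decr d x e : inB f d.+1 x -> 0 < x e -> inB f d (decr x e).
Proof.
case=> Px sx xe; split => [U|]; last by have := xsum_decr [set: T] xe; rewrite in_setT sx; lia.
by have := xsum_decr U xe; have := Px U; lia.
Qed.

Lemma inB_shift d x e g : inB f d x -> 0 < x e -> inP f (shift x e g) -> inB f d (shift x e g).
Proof.
case=> _ sx xe Px; split => //.
by have := xsum_shift g [set: T] xe; rewrite !in_setT sx; lia.
Qed.

Lemma inB_downward m k : (exists x, inB f m x) -> k <= m -> exists y, inB f k y.
Proof.
elim: m => [|m IH] Bm; first by rewrite leqn0 => /eqP ->.
rewrite leq_eqVlt ltnS => /orP [/eqP -> //|]; apply: IH.
have [x [Px sx]] := Bm; have [e _ xe] : exists2 e, e \in [set: T] & 0 < x e.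
  by apply: exists_ltn_of_sum; rewrite big1 // -/(xsum x _) sx.
by exists (decr x e); apply: inB_decr.
Qed.

Lemma inB_exists_ltn d d' x y : inB f d x -> inB f d' y -> d < d' -> exists g, x g < y g.
Proof.
case=> _ sx [_ sy] lt_d; have : xsum x [set: T] < xsum y [set: T] by rewrite sx sy.
by case/exists_ltn_of_sum => g _; exists g.
Qed.

(* Truncating f at d turns B_f(d) into the bases of a polymatroid, so the
   first alternative of the exchange lemma cannot occur. *)
Lemma base_exchange d x y e : inB f d x -> inB f d y -> y e < x e ->
  exists g, [/\ x g < y g, inP f (shift y g e) & inP f (shift x e g)].
Proof.
move=> Bx By lt_e; have [f0 f_mono f_submod] := f_rank.
pose h U := minn (f U) d.
have h_submod A B : h (A :|: B) + h (A :&: B) <= h A + h B.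
  have := f_submod A B; have := f_mono _ _ (subsetIl A B).
  have := f_mono _ _ (subsetUl A B); have := f_mono _ _ (subsetUr A B).
  by rewrite /h; lia.
have inPh z : inB f d z -> inP h z.
  case=> Pz sz U; rewrite leq_min Pz -sz; apply: xsum_subset; exact: subsetT.
have inPf z : inP h z -> inP f z by move=> Pz U; apply: leq_trans (Pz U) (geq_minl _ _).
have h0 : h set0 = 0 by rewrite /h f0 min0n.
case: (polymatroid_exchange h0 h_submod (inPh _ Bx) (inPh _ By) lt_e) => [Pe|[g [lt_g P1 P2]]].
  by have := Pe [set: T]; rewrite xsum_incr in_setT; case: By => _ ->; rewrite /h; lia.
by exists g; split => //; apply: inPf.
Qed.

End Bases.

Section Marginals.
Variables (R : realFieldType) (c : nat -> nat -> R).
Hypothesis c_reg : regular c.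
Local Open Scope ring_scope.

Lemma Cminus_homo_t x : (0 < x)%N -> {homo Cminus c x : t t' / (t <= t')%N >-> t <= t'}.
Proof.
move=> x0; apply: homo_leq => [//|t1 t2 t3|t]; first exact: le_trans.
exact: (c_reg t x0).1.
Qed.

Lemma Cminus_trade x t k : (0 < x)%N -> Cminus c x (t + k) <= Cminus c (x + k) t.
Proof.
elim: k x => [|k IH] x x0; first by rewrite !addn0.
by rewrite addnS -addSnnS; apply: le_trans (c_reg (t + k) x0).2 (IH x.+1 isT).
Qed.

Lemma Cminus_mono x t x' t' : (0 < x)%N -> (x <= x')%N -> (x + t <= x' + t')%N ->
  Cminus c x t <= Cminus c x' t'.
Proof.
move=> x0 le_x le_sum; rewrite -(subnKC le_x).
by apply: le_trans (Cminus_trade _ _ x0); apply: Cminus_homo_t => //; lia.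
Qed.

End Marginals.

Section Costs.
Variables (R : realFieldType) (T : finType) (C : T -> nat -> nat -> R).
Implicit Types t x y : {ffun T -> nat}.
Local Open Scope ring_scope.

Lemma cost_update t x y g : (forall h, h != g -> y h = x h) ->
  cost C t y = cost C t x + (C g (y g) (t g) - C g (x g) (t g)).
Proof.
move=> yx; rewrite /cost (bigD1 g) //= [in RHS](bigD1 g) //=.
by rewrite (eq_bigr (fun e => C e (x e) (t e))) => [|h /yx ->]; first ring.
Qed.

Lemma cost_incr t x g : cost C t (incr x g) = cost C t x + Cminus (C g) (x g).+1 (t g).
Proof.
rewrite (@cost_update t x _ g) => [|h /negbTE hg]; last by rewrite ffunE hg addn0.
by rewrite /Cminus ffunE eqxx addn1.
Qed.

Lemma cost_decr t x e : cost C t (decr x e) = cost C t x - Cminus (C e) (x e) (t e).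
Proof.
rewrite (@cost_update t x _ e) => [|h /negbTE he]; last by rewrite ffunE he subn0.
by rewrite /Cminus ffunE eqxx subn1 opprB.
Qed.

Lemma cost_shift t x e g : e != g -> cost C t (shift x e g) =
  cost C t x - Cminus (C e) (x e) (t e) + Cminus (C g) (x g).+1 (t g).
Proof. by move=> /negbTE eg; rewrite cost_incr cost_decr ffunE eq_sym eg subn0. Qed.

End Costs.

Section Proximity.
Variables (R : realFieldType) (T : finType) (f : {set T} -> nat) (C : T -> nat -> nat -> R).
Hypothesis f_rank : polymatroid_rank f.
Hypothesis C_reg : forall e, regular (C e).
Implicit Types t x y : {ffun T -> nat}.

Lemma optimal_exists t d : (exists x, inB f d x) -> exists y, optimal f C t d y.
Proof.
move=> [x0 Bx0].
pose val (v : {ffun T -> 'I_d.+1}) : {ffun T -> nat} := [ffun e => v e : nat].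
pose enc x : {ffun T -> 'I_d.+1} := [ffun e => inord (x e)].
have encK x : inB f d x -> val (enc x) = x.
  by move=> Bx; apply/ffunP => e; rewrite !ffunE inordK // ltnS (inB_bounded _ Bx).
pose feasible v := [forall U, xsum (val v) U <= f U] && (xsum (val v) [set: T] == d).
have feasible_enc x : inB f d x -> feasible (enc x).
  by move=> Bx; rewrite /feasible encK //; case: Bx => Px ->; rewrite eqxx andbT; apply/forallP.
case: (arg_minP (fun v => cost C t (val v)) (feasible_enc _ Bx0)) => v.
move=> /andP [/forallP Pv /eqP sv] min_v; exists (val v); split => // y By.
by rewrite -(encK y By); apply: min_v; apply: feasible_enc.
Qed.

Lemma shift_toward_optimal t t' d d' x y e g :
  optimal f C t d x -> optimal f C t' d' y -> y e < x e -> x g < y g ->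
  inP f (shift x e g) -> inP f (shift y g e) ->
  (Cminus (C e) (y e).+1 (t' e) <= Cminus (C e) (x e) (t e))%R ->
  (Cminus (C g) (x g).+1 (t g) <= Cminus (C g) (y g) (t' g))%R ->
  optimal f C t' d' (shift y g e) /\ l1dist x (shift y g e) < l1dist x y.
Proof.
move=> [Bx x_min] [By y_min] lt_e lt_g Px Py le_e le_g.
have eg : e != g by apply: contraTneq lt_e => ->; rewrite -leqNgt ltnW.
have x_e : 0 < x e by lia.
have y_g : 0 < y g by lia.
have := x_min _ (inB_shift Bx x_e Px); rewrite cost_shift // => cost_x.
split; last exact: l1dist_shift.
split=> [|z Bz]; first exact: inB_shift By y_g Py.
by apply: le_trans (y_min z Bz); rewrite cost_shift 1?eq_sym //; lra.
Qed.

Lemma optimal_incr t d x y g : optimal f C t d x -> optimal f C t d.+1 y -> x g < y g ->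
  inP f (incr x g) -> optimal f C t d.+1 (incr x g).
Proof.
move=> [Bx x_min] [By y_min] lt_g Pg; split=> [|z Bz]; first exact: inB_incr.
apply: le_trans (y_min z Bz); have y_g : 0 < y g by lia.
have := x_min _ (inB_decr By y_g); rewrite cost_decr cost_incr.
have : (Cminus (C g) (x g).+1 (t g) <= Cminus (C g) (y g) (t g))%R.
  by apply: Cminus_mono => //; lia.
lra.
Qed.

Lemma optimal_decr t d x y e : optimal f C t d.+1 x -> optimal f C t d y -> y e < x e ->
  inP f (incr y e) -> optimal f C t d (decr x e).
Proof.
move=> [Bx x_min] [By y_min] lt_e Pe; have x_e : 0 < x e by lia.
split=> [|z Bz]; first exact: inB_decr.
apply: le_trans (y_min z Bz).
have := x_min _ (inB_incr By Pe); rewrite cost_decr cost_incr.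
have : (Cminus (C e) (y e).+1 (t e) <= Cminus (C e) (x e) (t e))%R.
  by apply: Cminus_mono => //; lia.
lra.
Qed.

(* The arithmetic conditions are those under which Cminus_mono compares the
   marginal costs of the two opposite exchanges. *)
Definition improvable x t y t' := exists e g,
  [/\ y e < x e, x g < y g, (y e).+1 + t' e <= x e + t e & (x g).+1 + t g <= y g + t' g]
  /\ inP f (shift x e g) /\ inP f (shift y g e).

Definition optimum_within t d t' d' k := forall x, optimal f C t d x ->
  exists x', optimal f C t' d' x' /\ reach_le k x x'.

Lemma optimum_within_refl t d : optimum_within t d t d 0.
Proof. by move=> x x_opt; exists x. Qed.

Lemma optimum_within_trans t1 d1 t2 d2 t3 d3 k k' :
  optimum_within t1 d1 t2 d2 k -> optimum_within t2 d2 t3 d3 k' ->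
  optimum_within t1 d1 t3 d3 (k + k').
Proof.
move=> W12 W23 x1 /W12 [x2 [x2_opt r12]]; have [x3 [x3_opt r23]] := W23 _ x2_opt.
by exists x3; split => //; apply: reach_le_trans r12 r23.
Qed.

Lemma optimum_step t d t' d' x : optimal f C t d x -> (exists z, inB f d' z) ->
  (forall y, optimal f C t' d' y ->
    (exists x', optimal f C t' d' x' /\ reach_le 1 x x') \/ improvable x t y t') ->
  exists x', optimal f C t' d' x' /\ reach_le 1 x x'.
Proof.
move=> x_opt feasible step; have [y y_opt] := optimal_exists t' feasible.
move dist_y: (l1dist x y) => n; elim/ltn_ind: n y y_opt dist_y => n IH y y_opt dist_y.
case: (step y y_opt) => [//|[e [g [[lt_e lt_g le_e le_g] [Px Py]]]]].
have [opt' closer] := shift_toward_optimal x_opt y_opt lt_e lt_g Px Py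
  (Cminus_mono (C_reg e) (ltn0Sn _) lt_e le_e) (Cminus_mono (C_reg g) (ltn0Sn _) lt_g le_g).
by apply: IH opt' erefl; rewrite -dist_y.
Qed.

Lemma optimum_within_incr_t t a d : optimum_within t d (incr t a) d 1.
Proof.
move=> x x_opt; have [Bx _] := x_opt.
apply: (optimum_step x_opt) => [|y y_opt]; first by exists x.
have [By _] := y_opt.
case: (boolP [exists e, (y e < x e) && ((e != a) || ((y e).+1 < x e))]).
  move=> /existsP [e /andP [lt_e far_e]]; right.
  have [g [lt_g Py Px]] := base_exchange f_rank Bx By lt_e.
  exists e, g; split=> //; split=> //; rewrite !ffunE; first by case: eqP far_e => /=; lia.
  lia.
rewrite negb_exists => /forallP near; left; exists y; split=> //.
apply: (@reach_le1_of_leq_incr _ _ _ a) => [h|]; last by case: Bx => _ ->; case: By => _ ->.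
by have := near h; rewrite ffunE; case: eqP => [->|] /=; lia.
Qed.

Lemma optimum_within_decr_t t a d : optimum_within (incr t a) d t d 1.
Proof.
move=> x x_opt; have [Bx _] := x_opt.
apply: (optimum_step x_opt) => [|y y_opt]; first by exists x.
have [By _] := y_opt.
case: (boolP [exists g, (x g < y g) && ((g != a) || ((x g).+1 < y g))]).
  move=> /existsP [g /andP [lt_g far_g]]; right.
  have [e [lt_e Px Py]] := base_exchange f_rank By Bx lt_g.
  exists e, g; split=> //; split=> //; rewrite !ffunE; last by case: eqP far_g => /=; lia.
  lia.
rewrite negb_exists => /forallP near; left; exists y; split=> //; apply: reach_le1C.
apply: (@reach_le1_of_leq_incr _ _ _ a) => [h|]; last by case: Bx => _ ->; case: By => _ ->.
by have := near h; rewrite ffunE; case: eqP => [->|] /=; lia.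
Qed.

Lemma optimum_within_succ_d t d : (exists z, inB f d.+1 z) -> optimum_within t d t d.+1 1.
Proof.
move=> feasible x x_opt; have [Bx _] := x_opt; have [f0 _ f_submod] := f_rank.
apply: (optimum_step x_opt feasible) => y y_opt; have [By _] := y_opt.
have [g lt_g] := inB_exists_ltn Bx By (ltnSn d).
case: (polymatroid_exchange f0 f_submod (inB_inP By) (inB_inP Bx) lt_g) => [Pg|[e [lt_e Px Py]]].
  left; exists (incr x g); split; first exact: optimal_incr x_opt y_opt lt_g Pg.
  exact/reach_le1_step/elem_step_incr.
by right; exists e, g; split=> //; split; lia.
Qed.

Lemma optimum_within_pred_d t d : optimum_within t d.+1 t d 1.
Proof.
move=> x x_opt; have [Bx _] := x_opt; have [f0 _ f_submod] := f_rank.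
apply: (optimum_step x_opt (inB_downward (ex_intro _ x Bx) (leqnSn d))) => y y_opt.
have [By _] := y_opt.
have [e lt_e] := inB_exists_ltn By Bx (ltnSn d).
case: (polymatroid_exchange f0 f_submod (inB_inP Bx) (inB_inP By) lt_e) => [Pe|[g [lt_g Py Px]]].
  left; exists (decr x e); split; first exact: optimal_decr y_opt lt_e Pe.
  by apply/reach_le1_step/elem_step_decr; lia.
by right; exists e, g; split=> //; split; lia.
Qed.

Lemma optimum_within_t t t' d : optimum_within t d t' d (l1dist t t').
Proof.
move dist_t: (l1dist t t') => n; elim: n t dist_t => [|n IH] t dist_t.
  by rewrite (l1dist_eq0 dist_t); apply: optimum_within_refl.
have [a _ pos_a] : exists2 a, true & 0 < distn (t a) (t' a).
  by apply: exists_ltn_of_sum; rewrite big1 // -/(l1dist t t') dist_t.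
rewrite -add1n; case: (ltngtP (t a) (t' a)) => [lt_a|gt_a|eq_a].
- rewrite (l1dist_incr lt_a) in dist_t; case: dist_t => /IH W.
  by apply: (optimum_within_trans _ W); apply: optimum_within_incr_t.
- rewrite (l1dist_decr gt_a) in dist_t; case: dist_t => /IH W.
  rewrite -(@decrK _ t a); last by lia.
  by apply: (optimum_within_trans _ W); apply: optimum_within_decr_t.
- by rewrite eq_a /distn subnn in pos_a.
Qed.

Lemma optimum_within_d_up t d k : (exists z, inB f (d + k) z) -> optimum_within t d t (d + k) k.
Proof.
elim: k => [|k IH] feasible; first by rewrite addn0; apply: optimum_within_refl.
rewrite addnS in feasible *; rewrite -[k.+1]addn1.
apply: (optimum_within_trans _ (optimum_within_succ_d feasible)).
by apply/IH/(inB_downward feasible)/leqnSn.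
Qed.

Lemma optimum_within_d_down t d k : optimum_within t (d + k) t d k.
Proof.
elim: k => [|k IH]; first by rewrite addn0; apply: optimum_within_refl.
by rewrite addnS -[k.+1]add1n; apply: (optimum_within_trans _ IH); apply: optimum_within_pred_d.
Qed.

Lemma optimum_within_d t d d' : (exists z, inB f d' z) -> optimum_within t d t d' (distn d d').
Proof.
move=> feasible; have [le_d|/ltnW le_d] := leqP d d'.
  have -> : distn d d' = d' - d by rewrite /distn; lia.
  by rewrite -{1}(subnKC le_d); apply: optimum_within_d_up; rewrite subnKC.
have -> : distn d d' = d - d' by rewrite /distn; lia.
by rewrite -{1}(subnKC le_d); apply: optimum_within_d_down.
Qed.

End Proximity.

Theorem corollary3p6 (R : realFieldType) (T : finType) (f : {set T} -> nat)
  (C : T -> nat -> nat -> R) (D : nat -> Prop) :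
  0 < #|T| ->
  polymatroid_rank f ->
  (forall e x t, (0 <= C e x t)%R) ->
  (forall e, regular (C e)) ->
  (forall d, D d -> exists x, inB f d x) ->
  forall (t : {ffun T -> nat}) (d : nat) (x : {ffun T -> nat}),
    D d -> optimal f C t d x ->
  forall (d' : nat) (t' : {ffun T -> nat}), D d' ->
    exists x' : {ffun T -> nat},
      optimal f C t' d' x' /\ reach_le (l1dist t t' + distn d d') x x'.
Proof.
move=> _ f_rank _ C_reg feasible t d x _ x_opt d' t' D_d'.
move: x x_opt; rewrite addnC; apply: (optimum_within_trans (t2 := t) (d2 := d')).
- by apply: optimum_within_d => //; apply: feasible.
- by apply: optimum_within_t.
Qed.
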